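(* For $(a_{ij})\in\mathbb P^9$, the five Plücker relations hold if and only if the polynomial identity $A_zB_w=D_zD_w-DD_{zw}$ holds in $\mathbb C[z,w]$. If they hold, then the three superintegrability conditions (SIC) are equivalent to the two identities $$A_zD_w^2=2DD_wD_{zz}-\tfrac32D^2D_{zzw}-D_wD_z^2+DD_zD_{zw},\qquad B_wD_z^2=2DD_zD_{ww}-\tfrac32D^2D_{wwz}-D_zD_w^2+DD_wD_{zw},$$ and they imply $$D_z^2D_{ww}+D_w^2D_{zz}+D_zD_wD_{zw}=D\,(2D_{zz}D_{ww}+D_zD_{wwz}+D_wD_{zzw}+D_{zw}^2).$$
   Context: Homogeneous coordinates $a_{ij}$ ($i,j\ge0$, $i+j\le3$) on $\mathbb P^9$. Define polynomials in $z,w$: $D(z,w)=\sum_{0\le i,j\le2,(i,j)\ne(2,2)}a_{ij}z^iw^j$, $A_z(w)=a_{21}w^2+2a_{20}w+a_{30}$, $B_w(z)=a_{12}z^2+2a_{02}z+a_{03}$ ($A_z$ and $B_w$ are names of these polynomials; subscripts on $D$ denote partial derivatives, e.g. $D_{zzw}=\partial_z^2\partial_wD$). Plücker relations: $a_{03}a_{21}-a_{02}a_{11}+a_{01}a_{12}=0$, $a_{03}a_{20}-a_{02}a_{10}+a_{00}a_{12}=0$, $a_{03}a_{30}-a_{01}a_{10}+a_{00}a_{11}=0$, $a_{02}a_{30}-a_{01}a_{20}+a_{00}a_{21}=0$, $a_{12}a_{30}-a_{11}a_{20}+a_{10}a_{21}=0$. Superintegrability conditions (SIC): the polynomial identities $3A_zDD_{ww}-2A_zB_wD_z-2A_zD_w^2+DD_wD_{zz}=0$,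 $3B_wDD_{zz}-2A_zB_wD_w-2B_wD_z^2+DD_zD_{ww}=0$, and $2D^2D_{zz}D_{ww}-B_wDD_zD_{zz}-A_zDD_wD_{ww}-A_zB_wD_zD_w+A_z^2B_w^2=0$. All identities are identities of polynomials in $z,w$. *)

From HB Require Import structures.
From mathcomp Require Import all_boot all_order all_algebra.
From mathcomp Require Import mpoly.
Set Implicit Arguments. Unset Strict Implicit. Unset Printing Implicit Defensive.
Import Order.TTheory GRing.Theory Num.Theory.
Local Open Scope ring_scope.

Section Defs.
Variable C : numClosedFieldType.

Definition vz : {mpoly C[2]} := 'X_(0 : 'I_2).
Definition vw : {mpoly C[2]} := 'X_(1 : 'I_2).

Definition pz (p : {mpoly C[2]}) : {mpoly C[2]} := mderiv (0 : 'I_2) p.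
Definition pw (p : {mpoly C[2]}) : {mpoly C[2]} := mderiv (1 : 'I_2) p.

(* homogeneous coordinates a_ij (only i+j <= 3 are used) *)
Definition cst (c : C) : {mpoly C[2]} := c%:MP.

Definition Dpol (a : nat -> nat -> C) : {mpoly C[2]} :=
  \sum_(i < 3) \sum_(j < 3 | (nat_of_ord i, nat_of_ord j) != (2%N, 2%N))
     cst (a i j) * vz ^+ i * vw ^+ j.

Definition Az (a : nat -> nat -> C) : {mpoly C[2]} :=
  cst (a 2%N 1%N) * vw ^+ 2 + 2%:R * cst (a 2%N 0%N) * vw + cst (a 3%N 0%N).

Definition Bw (a : nat -> nat -> C) : {mpoly C[2]} :=
  cst (a 1%N 2%N) * vz ^+ 2 + 2%:R * cst (a 0%N 2%N) * vz + cst (a 0%N 3%N).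

Definition proj_point (a : nat -> nat -> C) : Prop :=
  exists i j : nat, (i + j <= 3)%N /\ a i j != 0.

Definition Plucker (a : nat -> nat -> C) : Prop :=
  [/\ a 0%N 3%N * a 2%N 1%N - a 0%N 2%N * a 1%N 1%N + a 0%N 1%N * a 1%N 2%N = 0,
      a 0%N 3%N * a 2%N 0%N - a 0%N 2%N * a 1%N 0%N + a 0%N 0%N * a 1%N 2%N = 0,
      a 0%N 3%N * a 3%N 0%N - a 0%N 1%N * a 1%N 0%N + a 0%N 0%N * a 1%N 1%N = 0,
      a 0%N 2%N * a 3%N 0%N - a 0%N 1%N * a 2%N 0%N + a 0%N 0%N * a 2%N 1%N = 0 &
      a 1%N 2%N * a 3%N 0%N - a 1%N 1%N * a 2%N 0%N + a 1%N 0%N * a 2%N 1%N = 0].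

Definition SIC (a : nat -> nat -> C) : Prop :=
  let D := Dpol a in let A := Az a in let B := Bw a in
  [/\ 3%:R * A * D * pw (pw D) - 2%:R * A * B * pz D - 2%:R * A * (pw D) ^+ 2
        + D * pw D * pz (pz D) = 0,
      3%:R * B * D * pz (pz D) - 2%:R * A * B * pw D - 2%:R * B * (pz D) ^+ 2
        + D * pz D * pw (pw D) = 0 &
      2%:R * D ^+ 2 * pz (pz D) * pw (pw D) - B * D * pz D * pz (pz D)
        - A * D * pw D * pw (pw D) - A * B * pz D * pw D + A ^+ 2 * B ^+ 2 = 0].

End Defs.

From HB Require Import structures.
From mathcomp Require Import all_boot all_order all_algebra.
From mathcomp Require Import mpoly ring.
Import Order.TTheory GRing.Theory Num.Theory.
Local Open Scope ring_scope.

(* Expanded in z and w, A_z B_w - (D_z D_w - D D_zw) has the five Plücker forms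
   (two of them doubled) as coefficients, and a quadratic polynomial vanishing
   identically has zero coefficients.  Under the Plücker identity, differentiating
   it (A depends only on w with A_w = D_zz, B only on z with B_z = D_ww) gives four
   more identities; modulo these five the first two SIC are -2 times the two
   displayed identities and the third is -D times the defect of the last one.
   Twice A times that defect is a combination of the first displayed identity,
   its first two z-derivatives and the Plücker identities (symmetrically for B),
   and when A = B = 0 the defect reduces to D_zw (D_z D_w - D D_zw) = D_zw A B. *)

Lemma subr0_of_eq {V : zmodType} {x y : V} : x = y -> x - y = 0.
Proof. by move->; rewrite subrr. Qed.

Lemma eq_of_scaled_sub {R : idomainType} {c x y e : R} :
  e = 0 -> c != 0 -> c * (x - y) = e -> x = y.
Proof. by move=> -> c_neq0 /eqP; rewrite mulf_eq0 (negbTE c_neq0) subr_eq0 => /eqP. Qed.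

Lemma quadratic_form_eq0 {R : idomainType} {c0 c1 c2 c3 c4 : R} : 2%:R != 0 :> R ->
  (forall x y : R, c0 + c1 * x + c2 * x ^+ 2 + c3 * y + c4 * y ^+ 2 = 0) ->
  [/\ c0 = 0, c1 = 0, c2 = 0, c3 = 0 & c4 = 0].
Proof.
move=> two_neq0 q0; pose q x y := c0 + c1 * x + c2 * x ^+ 2 + c3 * y + c4 * y ^+ 2.
have {}q0 x y : q x y = 0 := q0 x y.
have by_two (c e : R) : e = 0 -> 2%:R * (c - 0) = e -> c = 0.
  by move=> e0; exact: eq_of_scaled_sub e0 two_neq0.
split.
- by apply: (eq_of_scaled_sub (q0 0 0) (oner_neq0 _)); rewrite /q; ring.
- by apply: (by_two _ (q 1 0 - q (-1) 0)); [rewrite !q0 subrr | rewrite /q; ring].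
- apply: (by_two _ (q 1 0 + q (-1) 0 - 2%:R * q 0 0)).
    by rewrite !q0 mulr0 addr0 subrr.
  by rewrite /q; ring.
- by apply: (by_two _ (q 0 1 - q 0 (-1))); [rewrite !q0 subrr | rewrite /q; ring].
- apply: (by_two _ (q 0 1 + q 0 (-1) - 2%:R * q 0 0)).
    by rewrite !q0 mulr0 addr0 subrr.
  by rewrite /q; ring.
Qed.

Section MPolyDerivatives.
Variables (n : nat) (R : comNzRingType).
Implicit Types (p : {mpoly R[n]}) (i j : 'I_n).

Lemma mderiv_exp i p k :
  (p ^+ k.+1)^`M(i) = k.+1%:R * p ^+ k * p^`M(i) :> {mpoly R[n]}.
Proof.
elim: k => [|k IHk]; first by rewrite expr1 expr0 mulr1 mul1r.
by rewrite exprS mderivM IHk !exprS; move: (p ^+ k) => q; ring.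
Qed.

Lemma mderiv_natr i k : (k%:R : {mpoly R[n]})^`M(i) = 0.
Proof. by rewrite -mpolyC_nat mderivC. Qed.

Lemma mderiv_var i j : ('X_j : {mpoly R[n]})^`M(i) = (j == i)%:R.
Proof.
rewrite mderivX mnm1E; have [<-|_] := eqVneq j i; last by rewrite scale0r.
rewrite scale1r (_ : U_(j) - U_(j) = 0)%MM ?mpolyX0 //.
by apply/mnmP=> m; rewrite mnmBE subnn mnm0E.
Qed.

End MPolyDerivatives.

Lemma mpoly_two_neq0 {n : nat} {R : numDomainType} : 2%:R != 0 :> {mpoly R[n]}.
Proof. by rewrite -mpolyC_nat mpolyC_eq0 pnatr_eq0. Qed.

Section PartialDerivatives.
Variable C : numClosedFieldType.
Implicit Types (p q : {mpoly C[2]}) (c : C).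

Lemma pz0 : pz (0 : {mpoly C[2]}) = 0. Proof. exact: mderiv0. Qed.
Lemma pzD p q : pz (p + q) = pz p + pz q. Proof. exact: mderivD. Qed.
Lemma pzN p : pz (- p) = - pz p. Proof. exact: mderivN. Qed.
Lemma pzM p q : pz (p * q) = pz p * q + p * pz q. Proof. exact: mderivM. Qed.
Lemma pzX p n : pz (p ^+ n.+1) = n.+1%:R * p ^+ n * pz p. Proof. exact: mderiv_exp. Qed.
Lemma pz_natr n : pz (n%:R : {mpoly C[2]}) = 0. Proof. exact: mderiv_natr. Qed.
Lemma pz_cst c : pz (cst c) = 0. Proof. exact: mderivC. Qed.
Lemma pz_vz : pz (vz C) = 1. Proof. exact: mderiv_var. Qed.
Lemma pz_vw : pz (vw C) = 0. Proof. exact: mderiv_var. Qed.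

Lemma pw0 : pw (0 : {mpoly C[2]}) = 0. Proof. exact: mderiv0. Qed.
Lemma pwD p q : pw (p + q) = pw p + pw q. Proof. exact: mderivD. Qed.
Lemma pwN p : pw (- p) = - pw p. Proof. exact: mderivN. Qed.
Lemma pwM p q : pw (p * q) = pw p * q + p * pw q. Proof. exact: mderivM. Qed.
Lemma pwX p n : pw (p ^+ n.+1) = n.+1%:R * p ^+ n * pw p. Proof. exact: mderiv_exp. Qed.
Lemma pw_natr n : pw (n%:R : {mpoly C[2]}) = 0. Proof. exact: mderiv_natr. Qed.
Lemma pw_cst c : pw (cst c) = 0. Proof. exact: mderivC. Qed.
Lemma pw_vz : pw (vz C) = 0. Proof. exact: mderiv_var. Qed.
Lemma pw_vw : pw (vw C) = 1. Proof. exact: mderiv_var. Qed.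

Lemma pw_pz p : pw (pz p) = pz (pw p). Proof. exact: mderiv_comm. Qed.

Definition pzE := (pz0, pzD, pzN, pzM, pzX, pz_natr, pz_cst, pz_vz, pz_vw).
Definition pwE := (pw0, pwD, pwN, pwM, pwX, pw_natr, pw_cst, pw_vz, pw_vw).

End PartialDerivatives.

Section ThePolynomials.
Context {C : numClosedFieldType} (a : nat -> nat -> C).
Local Notation z := (vz C).
Local Notation w := (vw C).
Local Notation D := (Dpol a).

Lemma DpolE : D =
  cst (a 0%N 0%N) + cst (a 0%N 1%N) * w + cst (a 0%N 2%N) * w ^+ 2
  + cst (a 1%N 0%N) * z + cst (a 1%N 1%N) * z * w + cst (a 1%N 2%N) * z * w ^+ 2
  + cst (a 2%N 0%N) * z ^+ 2 + cst (a 2%N 1%N) * z ^+ 2 * w.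
Proof. by rewrite /Dpol !big_ord_recr !big_ord0 big_mkcond !big_ord_recr big_ord0 /=; ring. Qed.

Lemma pz_Az : pz (Az a) = 0.
Proof. by rewrite /Az !pzE; ring. Qed.

Lemma pw_Az : pw (Az a) = pz (pz D).
Proof. by rewrite /Az DpolE !(pzE, pwE); ring. Qed.

Lemma pw_Bw : pw (Bw a) = 0.
Proof. by rewrite /Bw !pwE; ring. Qed.

Lemma pz_Bw : pz (Bw a) = pw (pw D).
Proof. by rewrite /Bw DpolE !(pzE, pwE); ring. Qed.

Lemma plucker_expansion :
  Az a * Bw a - (pz D * pw D - D * pz (pw D)) =
    cst (a 0%N 3%N * a 3%N 0%N - a 0%N 1%N * a 1%N 0%N + a 0%N 0%N * a 1%N 1%N)
  + cst (2%:R * (a 0%N 2%N * a 3%N 0%N - a 0%N 1%N * a 2%N 0%N + a 0%N 0%N * a 2%N 1%N)) * z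
  + cst (a 1%N 2%N * a 3%N 0%N - a 1%N 1%N * a 2%N 0%N + a 1%N 0%N * a 2%N 1%N) * z ^+ 2
  + cst (2%:R * (a 0%N 3%N * a 2%N 0%N - a 0%N 2%N * a 1%N 0%N + a 0%N 0%N * a 1%N 2%N)) * w
  + cst (a 0%N 3%N * a 2%N 1%N - a 0%N 2%N * a 1%N 1%N + a 0%N 1%N * a 1%N 2%N) * w ^+ 2.
Proof.
by rewrite /Az /Bw DpolE !(pzE, pwE) /cst !(rmorphD, rmorphB, rmorphM, rmorph_nat); ring.
Qed.

Lemma cst_quadratic_eq0 (c0 c1 c2 c3 c4 : C) :
  cst c0 + cst c1 * z + cst c2 * z ^+ 2 + cst c3 * w + cst c4 * w ^+ 2 = 0 ->
  [/\ c0 = 0, c1 = 0, c2 = 0, c3 = 0 & c4 = 0].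
Proof.
move=> q0; apply: quadratic_form_eq0; first by rewrite pnatr_eq0.
move=> x y; move: (congr1 (meval (fun i : 'I_2 => if i == 0 then x else y)) q0).
rewrite /cst !expr2 !(mevalD, mevalM, mevalC, mevalXU, meval0) /= => <-; ring.
Qed.

Lemma plucker_iff : Plucker a <-> Az a * Bw a = pz D * pw D - D * pz (pw D).
Proof.
split.
  case=> p1 p2 p3 p4 p5; apply/subr0_eq.
  by rewrite plucker_expansion p1 p2 p3 p4 p5 mulr0 /cst mpolyC0; ring.
move=> /subr0_of_eq; rewrite plucker_expansion => /cst_quadratic_eq0 [p3 p4 p5 p2 p1].
have half_eq0 (c : C) : 2%:R * c = 0 -> c = 0.
  by move=> /eqP; rewrite mulf_eq0 pnatr_eq0 => /eqP.
by split=> //; apply: half_eq0.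
Qed.
End ThePolynomials.

Section Superintegrability.
Context {C : numClosedFieldType} {D A B : {mpoly C[2]}}.
Hypotheses (pz_A : pz A = 0) (pw_A : pw A = pz (pz D)).
Hypotheses (pw_B : pw B = 0) (pz_B : pz B = pw (pw D)).
Hypothesis plucker : A * B = pz D * pw D - D * pz (pw D).

Local Notation Dz := (pz D).
Local Notation Dw := (pw D).
Local Notation Dzz := (pz (pz D)).
Local Notation Dzw := (pz (pw D)).
Local Notation Dww := (pw (pw D)).
Local Notation Dzzw := (pz (pz (pw D))).
Local Notation Dzww := (pz (pw (pw D))).
Local Notation k := (cst (3%:R / 2%:R) : {mpoly C[2]}).

Local Notation sic1 :=
  (3%:R * A * D * Dww - 2%:R * A * B * Dz - 2%:R * A * Dw ^+ 2 + D * Dw * Dzz).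
Local Notation sic2 :=
  (3%:R * B * D * Dzz - 2%:R * A * B * Dw - 2%:R * B * Dz ^+ 2 + D * Dz * Dww).
Local Notation sic3 := (2%:R * D ^+ 2 * Dzz * Dww - B * D * Dz * Dzz - A * D * Dw * Dww
  - A * B * Dz * Dw + A ^+ 2 * B ^+ 2).
Local Notation sic_z := (2%:R * A * Dw ^+ 2
  - (4%:R * D * Dw * Dzz - 3%:R * D ^+ 2 * Dzzw - 2%:R * Dw * Dz ^+ 2 + 2%:R * D * Dz * Dzw)).
Local Notation sic_w := (2%:R * B * Dz ^+ 2
  - (4%:R * D * Dz * Dww - 3%:R * D ^+ 2 * Dzww - 2%:R * Dz * Dw ^+ 2 + 2%:R * D * Dw * Dzw)).
Local Notation defect := (Dz ^+ 2 * Dww + Dw ^+ 2 * Dzz + Dz * Dw * Dzw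
  - D * (2%:R * Dzz * Dww + Dz * Dzww + Dw * Dzzw + Dzw ^+ 2)).

Lemma two_mul_three_halves : 2%:R * k = 3%:R.
Proof. by rewrite /cst -!mpolyC_nat -rmorphM mulrC divfK ?pnatr_eq0. Qed.

Lemma pz_Dzz : pz Dzz = 0.
Proof. by rewrite -pw_A -pw_pz pz_A pw0. Qed.

Lemma pz_Dzzw : pz Dzzw = 0.
Proof. by rewrite -!pw_pz pz_Dzz pw0. Qed.

Lemma pw_Dww : pw Dww = 0.
Proof. by rewrite -pz_B pw_pz pw_B pz0. Qed.

Lemma plucker_z : A * Dww = Dzz * Dw - D * Dzzw.
Proof.
move: plucker => /(congr1 (@pz C)); rewrite !pzE pz_A pz_B => /subr0_of_eq h.
by apply: (eq_of_scaled_sub h (oner_neq0 _)); ring.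
Qed.

Lemma plucker_w : Dzz * B = Dz * Dww - D * Dzww.
Proof.
move: plucker => /(congr1 (@pw C)); rewrite !pwE pw_A pw_B !pw_pz => /subr0_of_eq h.
by apply: (eq_of_scaled_sub h (oner_neq0 _)); ring.
Qed.

Lemma plucker_zz : A * Dzww = Dzz * Dzw - Dz * Dzzw.
Proof.
move: plucker_z => /(congr1 (@pz C)); rewrite !pzE pz_A pz_Dzz pz_Dzzw => /subr0_of_eq h.
by apply: (eq_of_scaled_sub h (oner_neq0 _)); ring.
Qed.

Lemma plucker_ww : B * Dzzw = Dww * Dzw - Dw * Dzww.
Proof.
move: plucker_w => /(congr1 (@pw C)); rewrite !pwE pw_B !pw_pz pw_Dww pz0 => /subr0_of_eq h.
by apply: (eq_of_scaled_sub h (oner_neq0 _)); ring.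
Qed.

Lemma sic_z_z : sic_z = 0 ->
  2%:R * A * Dw * Dzw = 3%:R * D * Dzz * Dzw - 2%:R * D * Dz * Dzzw.
Proof.
move=> /(congr1 (@pz C)); rewrite !pzE pz_A pz_Dzz pz_Dzzw => h.
by apply: (eq_of_scaled_sub h mpoly_two_neq0); ring.
Qed.

Lemma sic_z_zz : sic_z = 0 ->
  2%:R * A * (Dzw ^+ 2 + Dw * Dzzw)
  = 3%:R * Dz * Dzz * Dzw - 2%:R * Dz ^+ 2 * Dzzw + D * Dzz * Dzzw.
Proof.
move=> /sic_z_z /(congr1 (@pz C)); rewrite !pzE pz_A pz_Dzz pz_Dzzw => /subr0_of_eq h.
by apply: (eq_of_scaled_sub h (oner_neq0 _)); ring.
Qed.

Lemma sic_w_w : sic_w = 0 ->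
  2%:R * B * Dz * Dzw = 3%:R * D * Dww * Dzw - 2%:R * D * Dw * Dzww.
Proof.
move=> /(congr1 (@pw C)); rewrite !pwE pw_B !pw_pz pw_Dww pz0 => h.
by apply: (eq_of_scaled_sub h mpoly_two_neq0); ring.
Qed.

Lemma sic_w_ww : sic_w = 0 ->
  2%:R * B * (Dzw ^+ 2 + Dz * Dzww)
  = 3%:R * Dw * Dww * Dzw - 2%:R * Dw ^+ 2 * Dzww + D * Dww * Dzww.
Proof.
move=> /sic_w_w /(congr1 (@pw C)); rewrite !pwE pw_B !pw_pz pw_Dww pz0 => /subr0_of_eq h.
by apply: (eq_of_scaled_sub h (oner_neq0 _)); ring.
Qed.

Lemma sic1E : sic1 = - sic_z.
Proof.
apply: (eq_of_scaled_sub (e := 3%:R * D * (A * Dww - (Dzz * Dw - D * Dzzw))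
  - 2%:R * Dz * (A * B - (Dz * Dw - D * Dzw))) _ (oner_neq0 _)); last by ring.
by rewrite (subr0_of_eq plucker) (subr0_of_eq plucker_z) !mulr0 subr0.
Qed.

Lemma sic2E : sic2 = - sic_w.
Proof.
apply: (eq_of_scaled_sub (e := 3%:R * D * (Dzz * B - (Dz * Dww - D * Dzww))
  - 2%:R * Dw * (A * B - (Dz * Dw - D * Dzw))) _ (oner_neq0 _)); last by ring.
by rewrite (subr0_of_eq plucker) (subr0_of_eq plucker_w) !mulr0 subr0.
Qed.

Lemma sic3E : sic3 = - D * defect.
Proof.
apply: (eq_of_scaled_sub (e := (A * B - (Dz * Dw - D * Dzw)) * (A * B - D * Dzw)
  - D * Dw * (A * Dww - (Dzz * Dw - D * Dzzw)) - D * Dz * (Dzz * B - (Dz * Dww - D * Dzww)))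
  _ (oner_neq0 _)); last by ring.
rewrite (subr0_of_eq plucker) (subr0_of_eq plucker_z) (subr0_of_eq plucker_w).
by rewrite mul0r !mulr0 !subr0.
Qed.

Lemma A_mul_defect : sic_z = 0 -> A * defect = 0.
Proof.
move=> Ez; apply: (eq_of_scaled_sub (e :=
    2%:R * (Dz ^+ 2 - 2%:R * D * Dzz) * (A * Dww - (Dzz * Dw - D * Dzzw)) + Dzz * sic_z
  + Dz * (2%:R * A * Dw * Dzw - (3%:R * D * Dzz * Dzw - 2%:R * D * Dz * Dzzw))
  - 2%:R * D * Dz * (A * Dzww - (Dzz * Dzw - Dz * Dzzw))
  - D * (2%:R * A * (Dzw ^+ 2 + Dw * Dzzw)
         - (3%:R * Dz * Dzz * Dzw - 2%:R * Dz ^+ 2 * Dzzw + D * Dzz * Dzzw)))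
  _ mpoly_two_neq0); last by ring.
rewrite Ez (subr0_of_eq plucker_z) (subr0_of_eq plucker_zz).
by rewrite (subr0_of_eq (sic_z_z Ez)) (subr0_of_eq (sic_z_zz Ez)) !mulr0 !addr0 !subr0.
Qed.

Lemma B_mul_defect : sic_w = 0 -> B * defect = 0.
Proof.
move=> Ew; apply: (eq_of_scaled_sub (e :=
    2%:R * (Dw ^+ 2 - 2%:R * D * Dww) * (Dzz * B - (Dz * Dww - D * Dzww)) + Dww * sic_w
  + Dw * (2%:R * B * Dz * Dzw - (3%:R * D * Dww * Dzw - 2%:R * D * Dw * Dzww))
  - 2%:R * D * Dw * (B * Dzzw - (Dww * Dzw - Dw * Dzww))
  - D * (2%:R * B * (Dzw ^+ 2 + Dz * Dzww)
         - (3%:R * Dw * Dww * Dzw - 2%:R * Dw ^+ 2 * Dzww + D * Dww * Dzww)))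
  _ mpoly_two_neq0); last by ring.
rewrite Ew (subr0_of_eq plucker_w) (subr0_of_eq plucker_ww).
by rewrite (subr0_of_eq (sic_w_w Ew)) (subr0_of_eq (sic_w_ww Ew)) !mulr0 !addr0 !subr0.
Qed.

Lemma defect_eq0 : sic_z = 0 -> sic_w = 0 -> defect = 0.
Proof.
move=> Ez Ew.
have /eqP := A_mul_defect Ez; rewrite mulf_eq0 => /orP[/eqP A0 | /eqP //].
have /eqP := B_mul_defect Ew; rewrite mulf_eq0 => /orP[/eqP B0 | /eqP //].
have Dzz0 : Dzz = 0 by rewrite -pw_A A0 pw0.
have Dzzw0 : Dzzw = 0 by rewrite -!pw_pz Dzz0 pw0.
have Dww0 : Dww = 0 by rewrite -pz_B B0 pz0.
apply: (eq_of_scaled_sub (e := Dzw * (Dz * Dw - D * Dzw - A * B)) _ (oner_neq0 _)).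
  by rewrite -plucker subrr mulr0.
by rewrite A0 Dzz0 Dzzw0 Dww0 pz0; ring.
Qed.

Lemma sic_zE :
  A * Dw ^+ 2 = 2%:R * D * Dw * Dzz - k * D ^+ 2 * Dzzw - Dw * Dz ^+ 2 + D * Dz * Dzw
  <-> sic_z = 0.
Proof.
have -> : sic_z = 2%:R * (A * Dw ^+ 2
    - (2%:R * D * Dw * Dzz - k * D ^+ 2 * Dzzw - Dw * Dz ^+ 2 + D * Dz * Dzw)).
  by rewrite -two_mul_three_halves; ring.
split=> [/subr0_of_eq -> | h]; first by rewrite mulr0.
by apply: (eq_of_scaled_sub h mpoly_two_neq0); ring.
Qed.

Lemma sic_wE :
  B * Dz ^+ 2 = 2%:R * D * Dz * Dww - k * D ^+ 2 * Dzww - Dz * Dw ^+ 2 + D * Dw * Dzw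
  <-> sic_w = 0.
Proof.
have -> : sic_w = 2%:R * (B * Dz ^+ 2
    - (2%:R * D * Dz * Dww - k * D ^+ 2 * Dzww - Dz * Dw ^+ 2 + D * Dw * Dzw)).
  by rewrite -two_mul_three_halves; ring.
split=> [/subr0_of_eq -> | h]; first by rewrite mulr0.
by apply: (eq_of_scaled_sub h mpoly_two_neq0); ring.
Qed.

Lemma sic_iff : [/\ sic1 = 0, sic2 = 0 & sic3 = 0] <->
  (A * Dw ^+ 2 = 2%:R * D * Dw * Dzz - k * D ^+ 2 * Dzzw - Dw * Dz ^+ 2 + D * Dz * Dzw /\
   B * Dz ^+ 2 = 2%:R * D * Dz * Dww - k * D ^+ 2 * Dzww - Dz * Dw ^+ 2 + D * Dw * Dzw).
Proof.
rewrite sic_zE sic_wE sic1E sic2E sic3E; split.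
  by case=> /eqP; rewrite oppr_eq0 => /eqP -> /eqP; rewrite oppr_eq0 => /eqP ->.
by case=> Ez Ew; rewrite Ez Ew (defect_eq0 Ez Ew) oppr0 mulr0.
Qed.

Lemma sic_defect : [/\ sic1 = 0, sic2 = 0 & sic3 = 0] ->
  Dz ^+ 2 * Dww + Dw ^+ 2 * Dzz + Dz * Dw * Dzw
  = D * (2%:R * Dzz * Dww + Dz * Dzww + Dw * Dzzw + Dzw ^+ 2).
Proof. by move/sic_iff=> [/sic_zE Ez /sic_wE Ew]; apply/subr0_eq/defect_eq0. Qed.

End Superintegrability.

Theorem lemma3p7 (C : numClosedFieldType) (a : nat -> nat -> C) :
  proj_point a ->
  let D := Dpol a in let A := Az a in let B := Bw a in
  (Plucker a <-> A * B = pz D * pw D - D * pz (pw D)) /\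
  (Plucker a ->
     (SIC a <->
        (A * (pw D) ^+ 2 = 2%:R * D * pw D * pz (pz D)
            - cst (3%:R / 2%:R) * D ^+ 2 * pw (pz (pz D))
            - pw D * (pz D) ^+ 2 + D * pz D * pz (pw D) /\
         B * (pz D) ^+ 2 = 2%:R * D * pz D * pw (pw D)
            - cst (3%:R / 2%:R) * D ^+ 2 * pz (pw (pw D))
            - pz D * (pw D) ^+ 2 + D * pw D * pz (pw D))) /\
     (SIC a ->
        (pz D) ^+ 2 * pw (pw D) + (pw D) ^+ 2 * pz (pz D) + pz D * pw D * pz (pw D)
        = D * (2%:R * pz (pz D) * pw (pw D) + pz D * pz (pw (pw D))
               + pw D * pw (pz (pz D)) + (pz (pw D)) ^+ 2))).
Proof.
move=> _ D A B; split; first exact: plucker_iff.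
move=> /plucker_iff plucker; rewrite !pw_pz.
split; first exact: sic_iff (pz_Az a) (pw_Az a) (pw_Bw a) (pz_Bw a) plucker.
exact: sic_defect (pz_Az a) (pw_Az a) (pw_Bw a) (pz_Bw a) plucker.
Qed.
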